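(* Let $\mathbb{G}$ be a finite graph and let $\mathbb{H}$ be a graph that contains a copy of $\mathbb{K}_3$ (i.e., three distinct vertices pairwise joined by edges) and such that $\mathrm{Pol}(\mathbb{H})$ satisfies $\Sigma_{\mathbb{G}}$. Then there is a graph homomorphism from $\mathbb{G}$ to $\mathbb{H}$.
   Context: A graph is a structure $(V,E)$ with a single symmetric binary relation $E$ (loops allowed); $\mathbb{K}_3$ is the complete loopless graph on three vertices. For a graph $\mathbb{H}$, a polymorphism is a homomorphism from the power $\mathbb{H}^n$ (vertex set $H^n$, with $(\bar a,\bar b)$ an edge iff $(a_i,b_i)$ is an edge for all $i$) to $\mathbb{H}$; $\mathrm{Pol}(\mathbb{H})$ is the set of all polymorphisms. A set of functions satisfies a height 1 condition (a finite set of identities $f(x_{\pi(1)},\dots,x_{\pi(n)})\approx g(x_{\rho(1)},\dots,x_{\rho(m)})$, universally quantified) if its symbols can be assigned functions of the set of the right arities making all identities true. For a finite graph $\mathbb{G}=(V,E)$, $\Sigma_{\mathbb{G}}$ is the height 1 condition with a ternary symbol $f_v$ for each $v\in V$, a $6$-ary symbol $g_{(u,v)}$ for each $(u,v)\in E$, and, for each $(u,v)\in E$, the identities $f_u(x,y,z)\approx g_{(u,v)}(x,y,x,z,y,z)$ and $f_v(x,y,z)\approx g_{(u,v)}(y,x,z,x,z,y)$. *)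

From mathcomp Require Import all_boot.
Set Implicit Arguments. Unset Strict Implicit. Unset Printing Implicit Defensive.

Definition is_pol (H : Type) (E : H -> H -> Prop) (n : nat)
  (f : ('I_n -> H) -> H) : Prop :=
  forall a b : 'I_n -> H, (forall i, E (a i) (b i)) -> E (f a) (f b).

(* Variable patterns of the identities of Sigma_G, with x,y,z = 0,1,2:
   left:  g(x,y,x,z,y,z)      right: g(y,x,z,x,z,y) *)
Definition pat_l (j : 'I_6) : 'I_3 := inord (nth 0 [:: 0; 1; 0; 2; 1; 2] j).
Definition pat_r (j : 'I_6) : 'I_3 := inord (nth 0 [:: 1; 0; 2; 0; 2; 1] j).

Definition satisfies_SigmaG (V : finType) (EG : rel V)
  (H : Type) (EH : H -> H -> Prop) : Prop :=
  exists (f : V -> ('I_3 -> H) -> H) (g : V -> V -> ('I_6 -> H) -> H),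
    (forall v, is_pol EH (f v)) /\
    (forall u v, EG u v -> is_pol EH (g u v)) /\
    (forall u v, EG u v -> forall x : 'I_3 -> H,
        f u x = g u v (fun j => x (pat_l j)) /\
        f v x = g u v (fun j => x (pat_r j))).

Definition contains_K3 (H : Type) (EH : H -> H -> Prop) : Prop :=
  exists a b c : H, [/\ a <> b, b <> c & a <> c] /\ EH a b /\ EH b c /\ EH a c.

Definition graph_hom (V : finType) (EG : rel V) (H : Type) (EH : H -> H -> Prop)
  (h : V -> H) : Prop := forall u v, EG u v -> EH (h u) (h v).

From mathcomp Require Import all_boot.

(* The homomorphism G -> H is read off from the ternary symbols of
   Sigma_G: fix a triangle (a, b, c) of H and send each vertex v of G to
   f_v(a, b, c).  For an edge (u, v) of G the identities of Sigma_G rewrite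
   f_u(a, b, c) and f_v(a, b, c) as g_(u,v)(a,b,a,c,b,c) and
   g_(u,v)(b,a,c,a,c,b); these two 6-tuples are coordinatewise adjacent,
   because the two variable patterns of Sigma_G never repeat a variable in the
   same position and any two distinct vertices of a triangle are adjacent.
   Since g_(u,v) is a polymorphism, the images are adjacent. *)

Section SigmaHomomorphism.

Variables (V : finType) (EG : rel V) (H : Type) (EH : H -> H -> Prop).

Definition triangle_tuple (x : 'I_3 -> H) : Prop :=
  forall i k : 'I_3, i != k -> EH (x i) (x k).

Lemma pat_l_neq_pat_r (j : 'I_6) : pat_l j != pat_r j.
Proof.
case: j => -[|[|[|[|[|[|m]]]]]] // lt_m6;
  by rewrite /pat_l /pat_r -(inj_eq val_inj) /= !inordK.
Qed.

Lemma triangle_tuple_patterns (x : 'I_3 -> H) :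
  triangle_tuple x -> forall j, EH (x (pat_l j)) (x (pat_r j)).
Proof. by move=> tri j; apply/tri/pat_l_neq_pat_r. Qed.

Lemma sigma_eval_hom (x : 'I_3 -> H) :
  triangle_tuple x -> satisfies_SigmaG EG EH ->
  exists h : V -> H, graph_hom EG EH h.
Proof.
move=> tri [f [g [_ [g_pol f_eq_g]]]].
exists (fun v => f v x) => u v uv.
have [-> ->] := f_eq_g u v uv x.
apply: (g_pol u v uv); exact: triangle_tuple_patterns.
Qed.

Lemma K3_triangle_tuple :
  (forall a b : H, EH a b -> EH b a) -> contains_K3 EH ->
  exists x : 'I_3 -> H, triangle_tuple x.
Proof.
move=> EH_sym [a [b [c [_ [ab [bc ac]]]]]].
exists (fun i => nth a [:: a; b; c] i).
by case=> -[|[|[|i]]] // _ [[|[|[|k]]] //] _ _ /=; auto.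
Qed.

End SigmaHomomorphism.

Theorem lemma3p2 (V : finType) (EG : rel V) (H : Type) (EH : H -> H -> Prop) :
  symmetric EG ->
  (forall a b : H, EH a b -> EH b a) ->
  contains_K3 EH ->
  satisfies_SigmaG EG EH ->
  exists h : V -> H, graph_hom EG EH h.
Proof.
move=> _ EH_sym K3 sigma.
have [x tri] := @K3_triangle_tuple H EH EH_sym K3.
exact: sigma_eval_hom tri sigma.
Qed.
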